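(* Let $\mu$ be a positive finite Borel measure on $\mathbb{R}^d$ and $0\le\alpha\le d$, and assume $$\liminf_{r\to\infty}\frac{1}{r^{d-\alpha}}\int_{|t|<r}|\widehat{\mu}(t)|^2\,dt>0.$$ Let $\Lambda\subset\mathbb{R}^d$ be countable and suppose $E(\Lambda)$ is a Bessel system in $L^2(\mu)$. Then there is a constant $C$ such that $$\sup_{x\in\mathbb{R}^d}\#\big(\Lambda\cap B(x,r)\big)\le C r^\alpha\quad\text{for all } r\ge 1.$$
   Context: $\widehat{\mu}(t)=\int_{\mathbb{R}^d}e^{-2\pi i\langle t,x\rangle}d\mu(x)$. For $\lambda\in\mathbb{R}^d$, $e_\lambda(x)=e^{2\pi i\langle\lambda,x\rangle}$ and $E(\Lambda)=\{e_\lambda\}_{\lambda\in\Lambda}$. A system $\{f_n\}$ in a Hilbert space $H$ is a Bessel system if there is $C>0$ with $\sum_n|\langle f,f_n\rangle|^2\le C\|f\|^2$ for all $f\in H$. $B(x,r)$ is the open ball of radius $r$ centered at $x$. *)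

From HB Require Import structures.
From mathcomp Require Import all_boot all_order all_algebra.
From mathcomp Require Import all_classical all_reals all_analysis.
Set Implicit Arguments. Unset Strict Implicit. Unset Printing Implicit Defensive.
Import Order.TTheory GRing.Theory Num.Theory.
Import numFieldNormedType.Exports.
Local Open Scope classical_set_scope.
Local Open Scope ring_scope.

Section Defs.
Context (R : realType).

(* R^d with its Borel sigma-algebra (generated by the open sets of the
   product = Euclidean topology on row vectors). *)
Definition Rd (d : nat) := g_sigma_algebraType (@open ('rV[R]_d)).

Definition dotp d (t x : 'rV[R]_d) : R := \sum_(i < d) t ord0 i * x ord0 i.
Definition enorm d (x : 'rV[R]_d) : R := Num.sqrt (dotp x x).
Definition eball d (x : 'rV[R]_d) (r : R) : set 'rV[R]_d :=
  [set y | enorm (y - x) < r].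

Definition phase d (t x : 'rV[R]_d) : R := 2 * pi * dotp t x.

(* Fourier transform of mu:  mu^(t) = int e^{-2 pi i <t,x>} dmu(x)
   = ft_re mu t + i * ft_im mu t. *)
Definition ft_re d (mu : {measure set (Rd d) -> \bar R}) (t : 'rV[R]_d) : R :=
  fine (\int[mu]_(x in setT) (cos (phase t x))%:E)%E.
Definition ft_im d (mu : {measure set (Rd d) -> \bar R}) (t : 'rV[R]_d) : R :=
  - fine (\int[mu]_(x in setT) (sin (phase t x))%:E)%E.
Definition ft_abs2 d (mu : {measure set (Rd d) -> \bar R}) (t : 'rV[R]_d) : R :=
  ft_re mu t ^+ 2 + ft_im mu t ^+ 2.

(* Lebesgue integral on R^d of a nonnegative function, computed as the
   iterated one-dimensional Lebesgue integral (Tonelli). *)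
Fixpoint leb_int (d : nat) : ('rV[R]_d -> \bar R) -> \bar R :=
  match d with
  | 0 => fun f => f 0
  | n.+1 => fun f =>
      (\int[@lebesgue_measure R]_(s in setT)
         leb_int (fun y : 'rV[R]_n => f (row_mx (\row_(_ < 1) s) y)))%E
  end.

(* A complex function f = u + i v on R^d belongs to L^2(mu). *)
Definition L2c d (mu : {measure set (Rd d) -> \bar R}) (u v : Rd d -> R) :=
  [/\ measurable_fun setT u, measurable_fun setT v &
      (\int[mu]_(x in setT) (u x ^+ 2 + v x ^+ 2)%:E < +oo)%E].

Definition L2norm2 d (mu : {measure set (Rd d) -> \bar R}) (u v : Rd d -> R)
  : \bar R := (\int[mu]_(x in setT) (u x ^+ 2 + v x ^+ 2)%:E)%E.

(* <f, e_l> = int (u + i v) e^{-2 pi i <l,x>} dmu = coef_re + i coef_im *)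
Definition coef_re d (mu : {measure set (Rd d) -> \bar R}) (u v : Rd d -> R)
  (l : 'rV[R]_d) : R :=
  fine (\int[mu]_(x in setT)
          (u x * cos (phase l x) + v x * sin (phase l x))%:E)%E.
Definition coef_im d (mu : {measure set (Rd d) -> \bar R}) (u v : Rd d -> R)
  (l : 'rV[R]_d) : R :=
  fine (\int[mu]_(x in setT)
          (v x * cos (phase l x) - u x * sin (phase l x))%:E)%E.
Definition coef_abs2 d (mu : {measure set (Rd d) -> \bar R}) (u v : Rd d -> R)
  (l : 'rV[R]_d) : R := coef_re mu u v l ^+ 2 + coef_im mu u v l ^+ 2.

Definition Bessel d (mu : {measure set (Rd d) -> \bar R}) (Lam : set 'rV[R]_d) :=
  exists C : R, 0 < C /\
    forall u v : Rd d -> R, L2c mu u v ->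
      (\esum_(l in Lam) (coef_abs2 mu u v l)%:E <= C%:E * L2norm2 mu u v)%E.

End Defs.

(* Testing the Bessel inequality on the exponential e_y gives, for every
   finite F in Lam, sum_{l in F} |mu^(y - l)|^2 <= C mu(R^d) for all y.
   Integrating in y over a cube of side 4 rho around x, when F lies in
   B(x, rho), bounds #F times the integral of |mu^|^2 over B(0, rho) by
   C mu(R^d) (4 rho)^d, the ball integral being translated into the cube.
   The liminf hypothesis bounds that integral below by c rho^(d - alpha) for
   rho >= M, and rho := r M yields #F <= C' r^alpha. *)

From HB Require Import structures.
From mathcomp Require Import all_boot all_order all_algebra.
From mathcomp Require Import all_classical all_reals all_analysis.
From mathcomp Require Import measurable_realfun finmap.
From mathcomp Require Import ring.
Set Implicit Arguments. Unset Strict Implicit. Unset Printing Implicit Defensive.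
Import Order.TTheory GRing.Theory Num.Theory.
Import numFieldNormedType.Exports.
Local Open Scope classical_set_scope.
Local Open Scope ring_scope.

Section ereal_sup_addition.
Context (R : realType).
Local Open Scope ereal_scope.

Let ge0_addr_ereal_sup_le (a : \bar R) (B : set (\bar R)) (c : \bar R) :
  0 <= a -> B !=set0 -> (forall b, B b -> 0 <= b) ->
  (forall b, B b -> a + b <= c) -> a + ereal_sup B <= c.
Proof.
move=> a0 [b Bb] B0 aBc.
have [ay|ay] := eqVneq a +oo.
  have bNy : b != -oo by rewrite gt_eqF// (lt_le_trans _ (B0 b Bb)).
  by move: (aBc b Bb); rewrite ay addye// leye_eq => /eqP ->; rewrite leey.
have af : a \is a fin_num by rewrite fin_numE ay andbT gt_eqF// (lt_le_trans _ a0).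
by rewrite -leeBrDl//; apply: ge_ereal_sup => x Bx; rewrite leeBrDl// aBc.
Qed.

Lemma ge0_ereal_supD_le (A B : set (\bar R)) (c : \bar R) :
  A !=set0 -> (forall a, A a -> 0 <= a) ->
  B !=set0 -> (forall b, B b -> 0 <= b) ->
  (forall a b, A a -> B b -> a + b <= c) -> ereal_sup A + ereal_sup B <= c.
Proof.
move=> [a0 Aa0] A0 BN B0 ABc; rewrite addeC; apply: ge0_addr_ereal_sup_le => //.
- by case: BN => b Bb; apply: le_ereal_sup_tmp; exists b => //; exact: B0.
- by exists a0.
move=> a Aa; rewrite addeC; apply: ge0_addr_ereal_sup_le => //; first exact: A0.
by move=> b Bb; apply: ABc.
Qed.

End ereal_sup_addition.

(* [leb_int] integrates functions not known to be measurable, so the library's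
   [ge0_le_integral] and [ge0_integralD] are out of reach; for nonnegative
   integrands both facts still follow from the definition of the integral as a
   supremum over simple functions. *)
Section ge0_integral_nonmeasurable.
Context d (T : measurableType d) (R : realType) (mu : {measure set T -> \bar R}).
Local Open Scope ereal_scope.
Import HBNNSimple.

Let nnsfun_le_set (f : T -> \bar R) :=
  [set sintegral mu h | h in [set h : {nnsfun T >-> R} | forall x, (h x)%:E <= f x]].

Let nnsfun_le_set_ge0 f y : nnsfun_le_set f y -> 0 <= y.
Proof. by move=> [h _ <-]; exact: sintegral_ge0. Qed.

Let nnsfun_le_set_neq0 f : (forall x, 0 <= f x) -> nnsfun_le_set f !=set0.
Proof. by move=> f0; exists (sintegral mu nnsfun0), nnsfun0. Qed.

Lemma ge0_le_integralT (f g : T -> \bar R) : (forall x, 0 <= f x) ->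
  (forall x, f x <= g x) -> \int[mu]_(x in setT) f x <= \int[mu]_(x in setT) g x.
Proof.
move=> f0 fg; rewrite !ge0_integralTE//; last by move=> x; exact: le_trans (fg x).
by apply: ereal_sup_le => _ [h /= hf <-]; exists h => // x; exact: le_trans (fg x).
Qed.

Lemma ge0_integralT_superadditive (f g : T -> \bar R) :
  (forall x, 0 <= f x) -> (forall x, 0 <= g x) ->
  \int[mu]_(x in setT) f x + \int[mu]_(x in setT) g x <=
  \int[mu]_(x in setT) (f x + g x).
Proof.
move=> f0 g0; rewrite !ge0_integralTE// => [|x]; last exact: adde_ge0.
apply: ge0_ereal_supD_le; [exact: nnsfun_le_set_neq0|exact: nnsfun_le_set_ge0|
                           exact: nnsfun_le_set_neq0|exact: nnsfun_le_set_ge0|].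
move=> _ _ [h1 /= h1f <-] [h2 /= h2g <-]; rewrite -sintegralD.
apply: ereal_sup_ubound; exists (add_nnsfun h1 h2) => //= x.
by rewrite EFinD leeD.
Qed.

End ge0_integral_nonmeasurable.

Section integral_measure_preserving.
Context d (T : measurableType d) (R : realType) (mu : {measure set T -> \bar R}).
Variable phi : {mfun T >-> T}.
Hypothesis phi_preserving : forall A, measurable A -> mu (phi @^-1` A) = mu A.
Local Open Scope ereal_scope.
Import HBNNSimple.

Section nnsfun_comp.
Variable h : {nnsfun T >-> R}.

Definition nnsfun_comp_fun := h \o phi.
HB.instance Definition _ := MeasurableFun.copy nnsfun_comp_fun (h \o phi).

Let comp_finite_image : finite_set (range nnsfun_comp_fun).
Proof. by apply: (sub_finite_set _ (fimfunP h)) => _ [x _ <-]; exists (phi x). Qed.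
HB.instance Definition _ := FiniteImage.Build T R nnsfun_comp_fun comp_finite_image.

Let comp_ge0 x : (0 <= nnsfun_comp_fun x)%R. Proof. exact: fun_ge0. Qed.
HB.instance Definition _ := isNonNegFun.Build T R nnsfun_comp_fun comp_ge0.

Definition nnsfun_comp : {nnsfun T >-> R} := nnsfun_comp_fun.

Lemma sintegral_comp_preserving : sintegral mu nnsfun_comp = sintegral mu h.
Proof.
rewrite !sintegralET; apply: eq_fsbigr => r _; congr (_ * _).
by rewrite /= /nnsfun_comp_fun comp_preimage phi_preserving.
Qed.

End nnsfun_comp.

Lemma ge0_le_integral_comp_preserving (g : T -> \bar R) : (forall x, 0 <= g x) ->
  \int[mu]_(x in setT) g x <= \int[mu]_(x in setT) g (phi x).
Proof.
move=> g0; rewrite !ge0_integralTE//; apply: ge_ereal_sup => _ [h /= hg <-].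
apply: ereal_sup_ubound; exists (nnsfun_comp h).
  by move=> x; exact: hg.
exact: sintegral_comp_preserving.
Qed.

End integral_measure_preserving.

Section lebesgue_shift.
Context (R : realType).
Local Notation T := (measurableTypeR R).
Local Notation L := (@lebesgue_measure R).

(* HB accepts no measurable-function instance keyed on [shift a] itself. *)
Definition shiftL (a : R) : T -> T := shift a.

Let measurable_shiftL (a : R) : measurable_fun setT (shiftL a).
Proof. by apply: measurable_funD => //; exact: measurable_cst. Qed.
HB.instance Definition _ (a : R) :=
  isMeasurableFun.Build _ _ _ _ (shiftL a) (measurable_shiftL a).

Lemma lebesgue_measure_shift (a : R) (A : set T) : measurable A ->
  L (shiftL a @^-1` A) = L A.
Proof.
move=> mA; apply/esym; rewrite -/(pushforward L (shiftL a) A).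
apply: lebesgue_measure_unique => //= _ [[b c]] _ <-.
rewrite /pushforward (_ : shiftL a @^-1` _ = `](b - a), (c - a)]%classic); last first.
  by apply/seteqP; split => x /=; rewrite !in_itv/= ltrBlDr lerBrDr.
rewrite !lebesgue_measure_itv/= !lte_fin ltrD2r.
by case: ifP => // _; rewrite -!EFinB opprB addrC addrA subrK addrC.
Qed.

Let ge0_integral_shift (g : T -> \bar R) (a : R) : (forall x, (0 <= g x)%E) ->
  (\int[L]_(x in setT) g (x + a : T)%R = \int[L]_(x in setT) g x)%E.
Proof.
move=> g0; apply/eqP; rewrite eq_le.
rewrite (ge0_le_integral_comp_preserving (lebesgue_measure_shift a)) ?andbT//.
apply: le_trans (ge0_le_integral_comp_preserving (lebesgue_measure_shift (- a))
  (fun x => g0 (x + a)%R)) _.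
by under eq_integral do rewrite /= /shiftL /shift subrK.
Qed.

Lemma integral_shift (g : T -> \bar R) (a : R) :
  (\int[L]_(x in setT) g (x + a : T)%R = \int[L]_(x in setT) g x)%E.
Proof.
rewrite [LHS]integralE [RHS]integralE.
rewrite -(ge0_integral_shift a (funepos_ge0 g)) -(ge0_integral_shift a (funeneg_ge0 g)).
by congr (_ - _)%E; apply: eq_integral => x _; rewrite ?funeposE ?funenegE.
Qed.

End lebesgue_shift.

Section leb_int.
Context (R : realType).
Local Notation L := (@lebesgue_measure R).
Local Open Scope ereal_scope.

Lemma leb_int_ge0 n (f : 'rV[R]_n -> \bar R) : (forall t, 0 <= f t) ->
  0 <= leb_int f.
Proof.
elim: n f => [|n IH] f f0 /=; first exact: f0.
by apply: integral_ge0 => s _; apply: IH.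
Qed.

Lemma le_leb_int n (f g : 'rV[R]_n -> \bar R) : (forall t, 0 <= f t) ->
  (forall t, f t <= g t) -> leb_int f <= leb_int g.
Proof.
elim: n f g => [|n IH] f g f0 fg /=; first exact: fg.
by apply: ge0_le_integralT => s; [exact: leb_int_ge0|exact: IH].
Qed.

Lemma leb_int_superadditive n (f g : 'rV[R]_n -> \bar R) :
  (forall t, 0 <= f t) -> (forall t, 0 <= g t) ->
  leb_int f + leb_int g <= leb_int (fun t => f t + g t).
Proof.
elim: n f g => [|n IH] f g f0 g0 //=.
apply: le_trans (ge0_integralT_superadditive _ _ _) _; try by move=> s; exact: leb_int_ge0.
apply: ge0_le_integralT => s; last exact: IH.
by rewrite adde_ge0 ?leb_int_ge0.
Qed.

Lemma leb_int_sum n (I : Type) (s : seq I) (f : I -> 'rV[R]_n -> \bar R) :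
  (forall i t, 0 <= f i t) ->
  \sum_(i <- s) leb_int (f i) <= leb_int (fun t => \sum_(i <- s) f i t).
Proof.
move=> f0; elim: s => [|i s IH].
  by rewrite big_nil; apply: leb_int_ge0 => t; rewrite big_nil.
rewrite big_cons; apply: le_trans (leeD2l _ IH) _.
apply: le_trans (leb_int_superadditive _ _) _ => // [t|]; first exact: sume_ge0.
by apply: le_leb_int => t; [rewrite adde_ge0 ?sume_ge0|rewrite big_cons].
Qed.

Let add_row_mx_head n (s : R) (y : 'rV[R]_n) (a : 'rV[R]_(1 + n)) :
  (row_mx (\row_(_ < 1) s) y + a =
   row_mx (\row_(_ < 1) (s + a ord0 ord0)) (y + rsubmx a))%R.
Proof.
apply/matrixP => i j; rewrite (ord1 i) mxE -(splitK j).
case: (fintype.split j) => k /=; rewrite ?row_mxEl ?row_mxEr !mxE//.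
by rewrite (ord1 k); congr (_ + a _ _)%R; apply: val_inj.
Qed.

Lemma leb_int_shift n (f : 'rV[R]_n -> \bar R) (a : 'rV[R]_n) :
  leb_int (fun t => f (t + a)%R) = leb_int f.
Proof.
elim: n f a => [|n IH] f a /=; first by rewrite add0r (thinmx0 a).
rewrite -[RHS](integral_shift _ (a ord0 ord0)); apply: eq_integral => s _.
rewrite -[in RHS](IH _ (rsubmx (a : 'rV[R]_(1 + n)))); congr leb_int; apply: funext => y.
by rewrite (add_row_mx_head s y (a : 'rV[R]_(1 + n))).
Qed.

Lemma leb_int_box n (z : 'rV[R]_n) (rho K : R) : (0 <= rho)%R -> (0 <= K)%R ->
  leb_int (fun y : 'rV[R]_n =>
    (K * \prod_(i < n) \1_(ball (z ord0 i) rho) (y ord0 i))%:E) =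
  (K * (rho *+ 2) ^+ n)%:E.
Proof.
elim: n z K => [|n IH] z K rho0 K0 /=; first by rewrite big_ord0 expr0.
have K'0 : (0 <= K * (rho *+ 2) ^+ n)%R by rewrite mulr_ge0 // exprn_ge0 // mulrn_wge0.
transitivity (\int[L]_(s in setT)
   (K * (rho *+ 2) ^+ n * \1_(ball (z ord0 ord0) rho) s)%:E).
  apply: eq_integral => s _.
  rewrite mulrAC -(IH (rsubmx (z : 'rV[R]_(1 + n)))) ?mulr_ge0//.
  congr leb_int; apply: funext => y; congr EFin.
  rewrite big_ord_recl mulrA; congr (_ * _ * _)%R.
    rewrite (_ : ord0 = lshift n (ord0 : 'I_1)); last exact: val_inj.
    by rewrite (row_mxEl (\row_(_ < 1) (s : R)) y) mxE.
  apply: eq_bigr => i _; rewrite (_ : lift ord0 i = rshift 1 i); last exact: val_inj.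
  by rewrite (row_mxEr (\row_(_ < 1) (s : R)) y) mxE.
have mball : measurable (ball (z ord0 ord0) rho) by exact: measurable_ball.
rewrite (@integralZl_indic _ _ _ L setT measurableT (fun=> ball (z ord0 ord0) rho)) //;
  last by move=> /lt_le_trans/(_ K'0); rewrite ltxx.
rewrite integral_indic// setIT.
transitivity ((K * (rho *+ 2) ^+ n)%:E * (rho *+ 2)%:E).
  by congr (_ * _); exact: lebesgue_measure_ball.
by rewrite -EFinM exprS [(rho *+ 2 * _)%R]mulrC mulrA.
Qed.

End leb_int.

Section fourier.
Context (R : realType) (d : nat).

Lemma measurable_fun_Rd_continuous (f : 'rV[R]_d -> R) : continuous f ->
  measurable_fun setT (f : Rd R d -> R).
Proof.
move=> cf; apply: (measurability (R.-ocitv.-measurable)) => //.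
move=> _ [_ [[a b] _ <-] <-]; rewrite setTI.
have -> : (f : Rd R d -> R) @^-1` `]a, b]%classic =
    f @^-1` [set x | a < x] `\` f @^-1` [set x | b < x].
  apply/seteqP; split => x /=; rewrite in_itv/=.
    by move=> /andP[-> fxb]; split => //; apply/negP; rewrite -leNgt.
  by move=> [-> /negP]; rewrite -leNgt.
apply: measurableD; apply: sub_sigma_algebra; apply: open_comp.
- by move=> x _; exact: cf.
- exact: open_gt.
- by move=> x _; exact: cf.
- exact: open_gt.
Qed.

Lemma measurable_phase (y : 'rV[R]_d) :
  measurable_fun setT (fun x : Rd R d => phase y x).
Proof.
apply: measurable_funM; first exact: measurable_cst.
apply: measurable_sum => i; apply: measurable_funM; first exact: measurable_cst.
by apply: measurable_fun_Rd_continuous => x; exact: coord_continuous.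
Qed.

Lemma phaseB (y l x : 'rV[R]_d) : phase (y - l) x = phase y x - phase l x.
Proof.
rewrite /phase /dotp -mulrBr -sumrB; congr (_ * _).
by apply: eq_bigr => i _; rewrite !mxE mulrBl.
Qed.

Variable mu : {finite_measure set (Rd R d) -> \bar R}.
Local Open Scope ereal_scope.

Let e_re (y : 'rV[R]_d) (x : Rd R d) := cos (phase y x).
Let e_im (y : 'rV[R]_d) (x : Rd R d) := sin (phase y x).

Let L2norm2_exponential y : L2norm2 mu (e_re y) (e_im y) = mu setT.
Proof.
rewrite /L2norm2; under eq_integral do rewrite cos2Dsin2.
by rewrite integral_cst// mul1e.
Qed.

Let L2c_exponential y : L2c mu (e_re y) (e_im y).
Proof.
split.
- exact: measurableT_comp (continuous_measurable_fun (@continuous_cos R)) (measurable_phase y).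
- exact: measurableT_comp (continuous_measurable_fun (@continuous_sin R)) (measurable_phase y).
by rewrite -/(L2norm2 _ _ _) L2norm2_exponential ltey_eq fin_num_measure.
Qed.

Let coef_abs2_exponential y l : coef_abs2 mu (e_re y) (e_im y) l = ft_abs2 mu (y - l).
Proof.
rewrite /coef_abs2 /ft_abs2 /coef_re /coef_im /ft_re /ft_im sqrrN.
congr (_ ^+ 2 + _ ^+ 2)%R; congr fine; apply: eq_integral => x _; congr EFin;
  rewrite /e_re /e_im phaseB.
  by rewrite cosD cosN sinN mulrN opprK.
by rewrite sinD cosN sinN mulrN.
Qed.

Lemma Bessel_ft_abs2_sum (Lam : set 'rV[R]_d) (C : R) :
  (forall u v, L2c mu u v ->
     \esum_(l in Lam) (coef_abs2 mu u v l)%:E <= C%:E * L2norm2 mu u v) ->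
  forall (y : 'rV[R]_d) (s : seq 'rV[R]_d), uniq s -> (forall l, l \in s -> Lam l) ->
  \sum_(l <- s) (ft_abs2 mu (y - l))%:E <= C%:E * mu setT.
Proof.
move=> BesselC y s us sLam.
rewrite -(L2norm2_exponential y); apply: le_trans (BesselC _ _ (L2c_exponential y)).
apply: esum_ge; exists [set` s]; first by split; [exact: finite_seq|exact: sLam].
rewrite -fsbig_seq//; apply: lee_sum => l _.
by rewrite coef_abs2_exponential.
Qed.

End fourier.

Section euclidean_ball.
Context (R : realType) (d : nat).

Lemma normr_coord_le_enorm (z : 'rV[R]_d) i : `|z ord0 i| <= enorm z.
Proof.
have sq_ge0 j : 0 <= z ord0 j * z ord0 j by rewrite -expr2 sqr_ge0.
rewrite /enorm -sqrtr_sqr ler_sqrt; last exact: sumr_ge0.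
by rewrite /dotp (bigD1 i)//= expr2 lerDl sumr_ge0.
Qed.

Lemma indic_eball_le_box (x l y : 'rV[R]_d) (r s : R) : eball x s l ->
  \1_(eball 0 r) (y - l) <= \prod_(i < d) \1_(ball (x ord0 i) (r + s)) (y ord0 i) :> R.
Proof.
rewrite /eball /= => lx; rewrite /indic.
have [/set_mem /=|_] := boolP (y - l \in _); last first.
  by apply: prodr_ge0 => i _; rewrite ler0n.
rewrite subr0 => yl; rewrite big1 // => i _; rewrite (_ : y ord0 i \in _ = true) //.
have yli : `|y ord0 i - l ord0 i| < r.
  by apply: le_lt_trans yl; have := normr_coord_le_enorm (y - l) i; rewrite !mxE.
have lxi : `|l ord0 i - x ord0 i| < s.
  by apply: le_lt_trans lx; have := normr_coord_le_enorm (l - x) i; rewrite !mxE.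
apply/mem_set; rewrite /ball /= distrC.
rewrite (_ : y ord0 i - x ord0 i = (y ord0 i - l ord0 i) + (l ord0 i - x ord0 i)).
  exact: le_lt_trans (ler_normD _ _) (ltrD yli lxi).
by rewrite addrA subrK.
Qed.

End euclidean_ball.

Lemma limf_einf_gt0_lbound (R : realType) (f : R -> \bar R) :
  (0 < limf_einf f (pinfty_nbhs R))%E ->
  exists M c : R, [/\ 1 <= M, 0 < c & forall r, M <= r -> (c%:E <= f r)%E].
Proof.
rewrite limf_einfE => /ereal_sup_gt[_ [V [M0 [_ M0V]] <-] infV_gt0].
have [c [c_gt0 c_le]] : exists c : R, 0 < c /\ (c%:E <= ereal_inf (f @` V))%E.
  by move: infV_gt0; case: (ereal_inf _) => [e| |]//= => [e_gt0|_];
    [exists e|exists 1; rewrite leey].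
exists (Num.max (M0 + 1) 1), c; split; rewrite ?le_max ?lexx ?orbT// => r.
rewrite ge_max => /andP[M0r _]; apply: le_trans c_le _.
by apply: ereal_inf_lbound; exists r => //; apply: M0V; rewrite (lt_le_trans _ M0r)// ltrDl.
Qed.

Definition ft_ball_integral (R : realType) d (mu : {measure set (Rd R d) -> \bar R}) (r : R) :=
  leb_int (fun t : 'rV[R]_d => (\1_(eball 0 r) t * ft_abs2 mu t)%:E).

Section Bessel_bounds.
Context (R : realType) (d : nat) (mu : {finite_measure set (Rd R d) -> \bar R}).
Variables (Lam : set 'rV[R]_d) (C : R).
Hypothesis C_gt0 : 0 < C.
Hypothesis BesselC : forall u v, L2c mu u v ->
  (\esum_(l in Lam) (coef_abs2 mu u v l)%:E <= C%:E * L2norm2 mu u v)%E.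

Let ft_abs2_ge0 t : 0 <= ft_abs2 mu t.
Proof. by rewrite addr_ge0 ?sqr_ge0. Qed.

Lemma Bessel_ft_ball_integral_sum (rho : R) (x : 'rV[R]_d) (s : seq 'rV[R]_d) :
  0 <= rho -> uniq s -> (forall l, l \in s -> Lam l /\ eball x rho l) ->
  (\sum_(l <- s) ft_ball_integral mu rho <=
   (C * fine (mu setT) * (4 * rho) ^+ d)%:E)%E.
Proof.
move=> rho0 us sLam.
pose box (y : 'rV[R]_d) := \prod_(i < d) \1_(ball (x ord0 i) (rho + rho)) (y ord0 i) : R.
pose g l y := (box y * ft_abs2 mu (y - l))%:E.
have g0 l y : (0 <= g l y)%E by rewrite lee_fin mulr_ge0 ?prodr_ge0.
apply: (@le_trans _ _ (\sum_(l <- s) leb_int (g l))%E).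
  rewrite big_seq [leRHS]big_seq; apply: lee_sum => l ls.
  rewrite /ft_ball_integral -(leb_int_shift _ (- l)).
  apply: le_leb_int => [t|t]; first by rewrite lee_fin mulr_ge0.
  by rewrite /g lee_fin ler_wpM2r// indic_eball_le_box//; have [] := sLam l ls.
apply: le_trans (leb_int_sum s g0) _.
have muT0 : 0 <= fine (mu setT) by rewrite fine_ge0// measure_ge0.
rewrite (_ : 4 * rho = (rho + rho) *+ 2); last by rewrite -mulr_natl; ring.
rewrite -(leb_int_box x) ?addr_ge0 ?mulr_ge0 ?(ltW C_gt0)//.
apply: le_leb_int => [t|t]; first exact: sume_ge0.
rewrite sumEFin lee_fin -mulr_sumr mulrC; apply: ler_wpM2r; first exact: prodr_ge0.
have := Bessel_ft_abs2_sum BesselC t us (fun l ls => (sLam l ls).1).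
by rewrite -lee_fin -sumEFin EFinM fineK// fin_num_measure.
Qed.

Variables (alpha M c : R).
Hypotheses (M_ge1 : 1 <= M) (c_gt0 : 0 < c).
Hypothesis energy_lbound : forall rho, M <= rho ->
  (c%:E <= ((rho `^ (d%:R - alpha))^-1)%:E * ft_ball_integral mu rho)%E.

Let K := C * fine (mu setT).

Lemma Bessel_uniq_seq_bound (r : R) (x : 'rV[R]_d) (s : seq 'rV[R]_d) :
  1 <= r -> uniq s -> (forall l, l \in s -> (Lam `&` eball x r) l) ->
  (size s)%:R <= K * 4 ^+ d * M `^ alpha / c * r `^ alpha.
Proof.
move=> r_ge1 us sS; set rho := r * M.
have r_gt0 : 0 < r by rewrite (lt_le_trans ltr01).
have M_gt0 : 0 < M by rewrite (lt_le_trans ltr01).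
have rho_gt0 : 0 < rho by rewrite mulr_gt0.
have P_gt0 : 0 < rho `^ (d%:R - alpha) by rewrite powR_gt0.
have sLam l : l \in s -> Lam l /\ eball x rho l.
  move=> /sS[Ll lx]; split => //; apply: lt_le_trans lx _.
  by rewrite ler_peMr// ltW.
have lbound : ((c * rho `^ (d%:R - alpha))%:E <= ft_ball_integral mu rho)%E.
  rewrite -(@lee_pmul2l _ (rho `^ (d%:R - alpha))^-1%:E) ?lte_fin ?invr_gt0//.
  by rewrite -EFinM mulrCA mulVf ?gt_eqF// mulr1 energy_lbound// ler_peMl// ltW.
have count : (size s)%:R * (c * rho `^ (d%:R - alpha)) <= K * (4 * rho) ^+ d.
  rewrite -lee_fin; apply: le_trans (Bessel_ft_ball_integral_sum (ltW rho_gt0) us sLam).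
  rewrite mulr_natl -iter_addr_0 -count_predT -big_const_seq.
  by rewrite -sumEFin; apply: lee_sum => l _; exact: lbound.
have rho_pow : rho ^+ d = rho `^ (d%:R - alpha) * (r `^ alpha * M `^ alpha).
  by rewrite -powRM ?ltW// -powRD ?subrK ?powR_mulrn ?ltW// (gt_eqF rho_gt0) implybT.
rewrite -(@ler_pM2r _ (c * rho `^ (d%:R - alpha))) ?mulr_gt0//.
apply: le_trans count _.
rewrite exprMn rho_pow le_eqVlt; apply/orP; left; apply/eqP.
by field; rewrite gt_eqF.
Qed.

End Bessel_bounds.

Local Open Scope fset_scope.
Local Open Scope ring_scope.

Lemma finite_set_bounded_uniq_seq (T : choiceType) (R : realType) (S : set T) (N : R) :
  (forall s : seq T, uniq s -> (forall l, l \in s -> S l) -> (size s)%:R <= N) ->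
  finite_set S /\ #|` fset_set S|%:R <= N.
Proof.
move=> Nbound.
have finS : finite_set S.
  apply: contrapT => /(infinite_set_fset (Num.truncn N).+1)[B BS NB].
  have := Nbound _ (fset_uniq B) (fun l lB => BS l lB).
  by rewrite leNgt (lt_le_trans (truncnS_gt N))// ler_nat.
split=> //; apply: Nbound; first exact: fset_uniq.
by move=> l; rewrite in_fset_set// => /set_mem.
Qed.

Theorem lemma3p1 (R : realType) (d : nat)
  (mu : {finite_measure set (Rd R d) -> \bar R}) (alpha : R) :
  0 <= alpha <= d%:R ->
  (0 < limf_einf
         (fun r : R => ((r `^ (d%:R - alpha))^-1)%:E *
            leb_int (fun t : 'rV[R]_d => (\1_(eball 0 r) t * ft_abs2 mu t)%:E))
         (pinfty_nbhs R))%E ->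
  forall Lam : set 'rV[R]_d, countable Lam -> Bessel mu Lam ->
  exists C : R, forall r : R, 1 <= r -> forall x : 'rV[R]_d,
    finite_set (Lam `&` eball x r) /\
    (#|` fset_set (Lam `&` eball x r)|%:R <= C * r `^ alpha).
Proof.
move=> _ liminf_gt0 Lam _ [C [C_gt0 BesselC]].
have [M [c [M_ge1 c_gt0 energy_lbound]]] := limf_einf_gt0_lbound liminf_gt0.
exists (C * fine (mu setT) * 4 ^+ d * M `^ alpha / c) => r r_ge1 x.
apply: finite_set_bounded_uniq_seq => s us sS.
exact: (Bessel_uniq_seq_bound (alpha := alpha) C_gt0 BesselC M_ge1 c_gt0
  energy_lbound r_ge1 us sS).
Qed.
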